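(* Let $G$ be a finite connected undirected graph with vertices $v_1,\dots,v_n$ whose adjacency matrix $A(G)$ has Perron–Frobenius eigenvalue $\lambda_1>0$, with unit Perron–Frobenius eigenvector $X=(x_1,\dots,x_n)$ (all $x_m>0$), and let $\lambda=|\lambda_2|/\lambda_1<1$ where $\lambda_2$ is the eigenvalue of second largest modulus. Let $\Gamma$ be a group, $\gamma:V(G)\to\Gamma$, $t_m=\gamma(v_m)$, assume $\{t_a^{-1}t_b\}$ generates $\Gamma$, and let $\kappa>0$ be such that for every nontrivial irreducible finite-dimensional unitary representation $\rho$ of $\Gamma$ with finite image and every unit vector $u$ there is $s\in\{t_a^{-1}t_b\}$ with $\|\rho(s)u-u\|>\kappa$. Set $d=1-(\min_m x_m^2)\kappa^2/8$. Then for every such $\rho$, of dimension $k$, with $U=\mathrm{diag}(\rho(t_1),\dots,\rho(t_n))$ and $A=\lambda_1^{-1}A(G)\otimes I_k$, we have $\|(UA)^k\|_{op}\le g(\lambda,d)^{\lfloor k/2\rfloor}$ for all $k\ge 0$, where $g(\lambda,d)<1$ is a number depending only on $\lambda$ and $d$ (as in the preceding shrinkage theorem: for Hermitian $A$ with eigenvalue $1$, all other eigenvalues of modulus $\le\lambda$, and unitary $U$ with $\|P_{\max}Uv\|\le d\|v\|$ on the $1$-eigenspace, $\|(UA)^2\|_{op}\le g(\lambda,d)$).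
   Context: $\|\cdot\|_{op}$ is the operator norm; $P_{\max}$ is the orthogonal projection onto the eigenspace of $A$ for the eigenvalue $1$. *)

From HB Require Import structures.
From mathcomp Require Import all_boot all_order all_algebra.
From mathcomp Require Import reals complex mxtens.
Set Implicit Arguments. Unset Strict Implicit. Unset Printing Implicit Defensive.
Import Order.TTheory GRing.Theory Num.Theory.
Local Open Scope ring_scope.

Definition simple_graph n (e : rel 'I_n) : Prop := symmetric e /\ irreflexive e.
Definition connected_graph n (e : rel 'I_n) : Prop := forall i j, connect e i j.

Definition adjmx (F : pzRingType) n (e : rel 'I_n) : 'M[F]_n :=
  \matrix_(i, j) (e i j)%:R.

Definition cvnorm (R : rcfType) m (v : 'cV[R[i]]_m) : R :=
  Num.sqrt (\sum_i ((complex.Re (v i 0)) ^+ 2 + (complex.Im (v i 0)) ^+ 2)).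

Definition cadj (R : rcfType) m p (M : 'M[R[i]]_(m, p)) : 'M[R[i]]_(p, m) :=
  (map_mx (@conjc R) M)^T.
Definition unitary_mx (R : rcfType) k (M : 'M[R[i]]_k) : Prop :=
  M *m cadj M = 1%:M.

Definition unitary_rep (gT : groupType) (R : rcfType) k
    (rho : gT -> 'M[R[i]]_k) : Prop :=
  [/\ rho 1%g = 1%:M,
      (forall x y, rho (x * y)%g = rho x *m rho y)
    & forall x, unitary_mx (rho x)].

Definition finite_image (gT : groupType) (R : rcfType) k
    (rho : gT -> 'M[R[i]]_k) : Prop :=
  exists s : seq 'M[R[i]]_k, forall x, rho x \in s.

(** A subspace of C^k is encoded as the column space of W, i.e. the row space
    of W^T; invariance means rho x *m W has its columns in the column space of W. *)
Definition irreducible_rep (gT : groupType) (R : rcfType) k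
    (rho : gT -> 'M[R[i]]_k) : Prop :=
  (0 < k)%N /\
  forall W : 'M[R[i]]_k,
    (forall x, ((rho x *m W)^T <= W^T)%MS) -> W^T == 0 \/ row_full W^T.

Definition nontrivial_rep (gT : groupType) (R : rcfType) k
    (rho : gT -> 'M[R[i]]_k) : Prop :=
  exists x, rho x != 1%:M.

(** The set {t_a^{-1} t_b} generates Gamma (it is closed under inverses and
    contains 1, so the generated subgroup is the set of finite products). *)
Definition generates_diffs (gT : groupType) n (gamma : 'I_n -> gT) : Prop :=
  forall x : gT, exists l : seq ('I_n * 'I_n),
    x = foldr (fun p acc => ((gamma p.1)^-1 * gamma p.2 * acc)%g) 1%g l.

Definition kappa_property (gT : groupType) (R : rcfType) n
    (gamma : 'I_n -> gT) (kappa : R) : Prop :=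
  forall k (rho : gT -> 'M[R[i]]_k),
    unitary_rep rho -> finite_image rho -> irreducible_rep rho ->
    nontrivial_rep rho ->
    forall u : 'cV[R[i]]_k, cvnorm u = 1 ->
      exists a b, kappa < cvnorm (rho ((gamma a)^-1 * gamma b)%g *m u - u).

(** U = diag(rho(t_1),...,rho(t_n)) = sum_i E_ii (x) rho(t_i). *)
Definition Ublock (gT : groupType) (R : rcfType) n k (gamma : 'I_n -> gT)
    (rho : gT -> 'M[R[i]]_k) : 'M[R[i]]_(n * k) :=
  \sum_(i < n) (delta_mx i i *t rho (gamma i)).

Definition Ablock (R : rcfType) n k (e : rel 'I_n) (lam1 : R) : 'M[R[i]]_(n * k) :=
  ((lam1^-1)%:C%C *: map_mx (fun x : R => x%:C%C) (adjmx R e)) *t (1%:M : 'M[R[i]]_k).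

From HB Require Import structures.
From mathcomp Require Import all_boot all_order all_algebra.
From mathcomp Require Import reals complex mxtens.
From mathcomp Require Import ring lra.
Set Implicit Arguments. Unset Strict Implicit. Unset Printing Implicit Defensive.
Import Order.TTheory GRing.Theory Num.Theory.
Local Open Scope ring_scope.

(* Let P be the orthogonal projection onto X (x) C^k, the 1-eigenspace of the
   normalised walk A.  Since the graph is connected, the Perron eigenvalue is
   simple, so A fixes P z and contracts z - P z by lam = |lam2|/lam1.  In the
   coordinates c of P z, the compression P U P acts as the average
   sum_m x_m^2 rho(t_m) c; the kappa-property makes two of the unit vectors
   rho(t_m) c at distance > kappa, so this average has norm at most d |c|.
   Now either z has a sizeable component off the eigenspace, which A shrinks,
   or P z carries most of the norm and U moves it off the eigenspace; in both
   cases |UAUA z| <= g(lam, d) |z|, while |UA| <= 1 takes care of odd powers. *)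

Section ComplexEuclidean.
Variable R : rcfType.
Local Notation C := (R[i]).

Definition sqmod (z : C) : R := complex.Re z ^+ 2 + complex.Im z ^+ 2.

Definition sqnorm m (v : 'cV[C]_m) : R := \sum_i sqmod (v i 0).

Definition redot m (u v : 'cV[C]_m) : R :=
  \sum_i (complex.Re (u i 0) * complex.Re (v i 0)
          + complex.Im (u i 0) * complex.Im (v i 0)).

Lemma ReM (x y : C) :
  complex.Re (x * y) = complex.Re x * complex.Re y - complex.Im x * complex.Im y.
Proof. by case: x; case: y. Qed.

Lemma ImM (x y : C) :
  complex.Im (x * y) = complex.Re x * complex.Im y + complex.Im x * complex.Re y.
Proof. by case: x => a b; case: y. Qed.

Lemma ReMr (r : R) (x : C) : complex.Re (r%:C%C * x) = r * complex.Re x.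
Proof. by rewrite ReM /= mul0r subr0. Qed.

Lemma ImMr (r : R) (x : C) : complex.Im (r%:C%C * x) = r * complex.Im x.
Proof. by rewrite ImM /= mul0r addr0. Qed.

Lemma sqmod_ge0 z : 0 <= sqmod z.
Proof. by rewrite /sqmod addr_ge0 ?sqr_ge0. Qed.

Lemma sqmod_eq0 z : (sqmod z == 0) = (z == 0).
Proof.
rewrite /sqmod paddr_eq0 ?sqr_ge0 // !sqrf_eq0.
by case: z => a b; rewrite eq_complex.
Qed.

Lemma sqmodM (x y : C) : sqmod (x * y) = sqmod x * sqmod y.
Proof. rewrite /sqmod ReM ImM; ring. Qed.

Lemma sqmodR (r : R) : sqmod r%:C%C = r ^+ 2.
Proof. by rewrite /sqmod /= expr0n addr0. Qed.

Lemma mulJc_sqmod (z : C) : conjc z * z = (sqmod z)%:C%C.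
Proof.
case: z => a b; rewrite /sqmod /=; apply/eqP; rewrite eq_complex /=.
by apply/andP; split; apply/eqP; ring.
Qed.

Variable m : nat.
Implicit Types u v w : 'cV[C]_m.

Lemma sqnorm_ge0 v : 0 <= sqnorm v.
Proof. by apply: sumr_ge0 => i _; apply: sqmod_ge0. Qed.

Lemma sqnorm_eq0 v : sqnorm v = 0 -> v = 0.
Proof.
move=> /eqP; rewrite psumr_eq0 => [/allP v0|i _]; last exact: sqmod_ge0.
apply/matrixP => i j; rewrite ord1 mxE; apply/eqP.
by rewrite -sqmod_eq0; apply: v0; rewrite mem_index_enum.
Qed.

Lemma sqnorm0 : sqnorm (0 : 'cV[C]_m) = 0.
Proof. by rewrite /sqnorm big1 // => i _; rewrite mxE sqmodR expr0n. Qed.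

Lemma sqnormN v : sqnorm (- v) = sqnorm v.
Proof. by apply: eq_bigr => i _; rewrite mxE /sqmod !raddfN !sqrrN. Qed.

Lemma sqnormZ (c : C) v : sqnorm (c *: v) = sqmod c * sqnorm v.
Proof. by rewrite /sqnorm mulr_sumr; apply: eq_bigr => i _; rewrite mxE sqmodM. Qed.

Lemma redotC u v : redot u v = redot v u.
Proof. by apply: eq_bigr => i _; rewrite mulrC [_ (u i 0) * _]mulrC. Qed.

Lemma redotvv v : redot v v = sqnorm v.
Proof. by apply: eq_bigr => i _; rewrite /sqmod !expr2. Qed.

Lemma redotN u v : redot u (- v) = - redot u v.
Proof. rewrite /redot -sumrN; apply: eq_bigr => i _; rewrite mxE !raddfN /=; ring. Qed.

Lemma redotZr (r : R) u v : redot u (r%:C%C *: v) = r * redot u v.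
Proof.
by rewrite /redot mulr_sumr; apply: eq_bigr => i _; rewrite !mxE ReMr ImMr; ring.
Qed.

Lemma redotDl u v w : redot (u + v) w = redot u w + redot v w.
Proof.
by rewrite /redot -big_split; apply: eq_bigr => i _; rewrite !mxE !raddfD /=; ring.
Qed.

Lemma redot0l v : redot 0 v = 0.
Proof. by rewrite /redot big1 // => i _; rewrite mxE /=; ring. Qed.

Lemma redotZl (r : R) u v : redot (r%:C%C *: u) v = r * redot u v.
Proof. by rewrite redotC redotZr redotC. Qed.

Lemma redot_suml (I : finType) (F : I -> 'cV[C]_m) v :
  redot (\sum_i F i) v = \sum_i redot (F i) v.
Proof.
exact: (big_morph (fun x => redot x v) (fun x y => redotDl x y v) (redot0l v)).
Qed.

Lemma redot_sumr (I : finType) (F : I -> 'cV[C]_m) u :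
  redot u (\sum_i F i) = \sum_i redot u (F i).
Proof. by rewrite redotC redot_suml; apply: eq_bigr => i _; rewrite redotC. Qed.

Lemma sqnormD u v : sqnorm (u + v) = sqnorm u + sqnorm v + 2 * redot u v.
Proof.
rewrite /sqnorm /redot mulr_sumr -!big_split; apply: eq_bigr => i _.
rewrite mxE /sqmod !raddfD /=; ring.
Qed.

Lemma redot_polar u v : redot u v = (sqnorm u + sqnorm v - sqnorm (u - v)) / 2.
Proof. by rewrite sqnormD sqnormN redotN; field. Qed.

Lemma sqnormB_le u v : sqnorm (u - v) <= 2 * sqnorm u + 2 * sqnorm v.
Proof.
have := sqnorm_ge0 (u + v); rewrite sqnormD => uv_ge0.
by rewrite sqnormD sqnormN redotN; lra.
Qed.

Lemma redot_CauchySchwarz u v : redot u v ^+ 2 <= sqnorm u * sqnorm v.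
Proof.
have [v0|v_neq0] := eqVneq (sqnorm v) 0.
  rewrite (sqnorm_eq0 v0) /redot big1 ?expr0n ?sqnorm0 ?mulr0 // => i _.
  by rewrite mxE; ring.
have v_gt0 : 0 < sqnorm v by rewrite lt_def v_neq0 sqnorm_ge0.
(* minimize the quadratic t |-> sqnorm (u + t v) *)
have := sqnorm_ge0 (u + (- (redot u v / sqnorm v))%:C%C *: v).
rewrite sqnormD sqnormZ sqmodR redotZr -(pmulr_rge0 _ v_gt0).
have -> : sqnorm v * (sqnorm u + (- (redot u v / sqnorm v)) ^+ 2 * sqnorm v
            + 2 * (- (redot u v / sqnorm v) * redot u v))
          = sqnorm u * sqnorm v - redot u v ^+ 2 by field.
by rewrite subr_ge0.
Qed.

Lemma cvnormE v : cvnorm v = Num.sqrt (sqnorm v).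
Proof. by []. Qed.

Lemma cvnorm_ge0 v : 0 <= cvnorm v.
Proof. exact: sqrtr_ge0. Qed.

Lemma sqr_cvnorm v : cvnorm v ^+ 2 = sqnorm v.
Proof. by rewrite sqr_sqrtr ?sqnorm_ge0. Qed.

Lemma cvnormZ (c : C) v : cvnorm (c *: v) = Num.sqrt (sqmod c) * cvnorm v.
Proof. by rewrite !cvnormE sqnormZ sqrtrM ?sqmod_ge0. Qed.

Lemma cvnorm_le_sqr v (r : R) : 0 <= r -> sqnorm v <= r ^+ 2 -> cvnorm v <= r.
Proof. by move=> r0; rewrite -sqr_cvnorm ler_pXn2r ?nnegrE ?cvnorm_ge0. Qed.

Lemma cvnorm_le_sqnorm p u (v : 'cV[C]_p) :
  sqnorm u <= sqnorm v -> cvnorm u <= cvnorm v.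
Proof. exact: ler_wsqrtr. Qed.

Lemma redot_le u v : redot u v <= cvnorm u * cvnorm v.
Proof.
rewrite !cvnormE -sqrtrM ?sqnorm_ge0 //; apply: le_trans (ler_norm _) _.
by rewrite -sqrtr_sqr; apply/ler_wsqrtr/redot_CauchySchwarz.
Qed.

Lemma cvnormD u v : cvnorm (u + v) <= cvnorm u + cvnorm v.
Proof.
apply: cvnorm_le_sqr; first by rewrite addr_ge0 ?cvnorm_ge0.
by rewrite sqnormD sqrrD !sqr_cvnorm; have := redot_le u v; lra.
Qed.

End ComplexEuclidean.

Section ConjugateTranspose.
Variable R : rcfType.
Local Notation C := (R[i]).

Lemma cadjM m p q (A : 'M[C]_(m, p)) (B : 'M[C]_(p, q)) :
  cadj (A *m B) = cadj B *m cadj A.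
Proof. by rewrite /cadj map_mxM trmx_mul. Qed.

Lemma cadjK m p (A : 'M[C]_(m, p)) : cadj (cadj A) = A.
Proof. by apply/matrixP => i j; rewrite !mxE conjcK. Qed.

Lemma trmxC_cadj m p (A : 'M[C]_(m, p)) : (A ^t*)%sesqui = cadj A.
Proof. by rewrite /cadj map_trmx. Qed.

Lemma sqnorm_cadj m (v : 'cV[C]_m) : (sqnorm v)%:C%C = (cadj v *m v) 0 0.
Proof.
rewrite mxE /sqnorm rmorph_sum.
by apply: eq_bigr => i _; rewrite !mxE mulJc_sqmod.
Qed.

Lemma sqnorm_isometry m (Q : 'M[C]_m) (v : 'cV[C]_m) :
  cadj Q *m Q = 1%:M -> sqnorm (Q *m v) = sqnorm v.
Proof.
move=> QQ; apply: complexI; rewrite !sqnorm_cadj cadjM.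
by rewrite -mulmxA (mulmxA (cadj Q)) QQ mul1mx.
Qed.

Lemma cvnorm_isometry m (Q : 'M[C]_m) (v : 'cV[C]_m) :
  cadj Q *m Q = 1%:M -> cvnorm (Q *m v) = cvnorm v.
Proof. by move=> QQ; rewrite !cvnormE sqnorm_isometry. Qed.

Lemma unitary_mx_cadj k (M : 'M[C]_k) : unitary_mx M -> cadj M *m M = 1%:M.
Proof. exact: mulmx1C. Qed.

End ConjugateTranspose.

Section Complexification.
Variable R : rcfType.
Local Notation C := (R[i]).

Definition cmx m p (M : 'M[R]_(m, p)) : 'M[C]_(m, p) := map_mx (real_complex R) M.

Lemma cadj_cmx m p (M : 'M[R]_(m, p)) : cadj (cmx M) = cmx M^T.
Proof. by apply/matrixP => i j; rewrite !mxE conjc_real. Qed.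

Lemma cmx_herm n (G : 'M[R]_n) : G^T = G -> cmx G \is hermsymmx.
Proof.
by move=> GT; apply/is_hermitianmxP; rewrite expr0 scale1r trmxC_cadj cadj_cmx GT.
Qed.

Lemma eigenvalue_cmx n (G : 'M[R]_n) (a : R) :
  eigenvalue (cmx G) a%:C%C -> eigenvalue G a.
Proof.
by rewrite !eigenvalue_root_char /cmx -map_char_poly (fmorph_root (real_complex R)).
Qed.

(* The coordinate of [y] along a real vector [X]; for a unit [X] it is the
   coefficient of the orthogonal projection of [y] onto the line of [X]. *)
Definition xcoord n (X : 'cV[R]_n) (y : 'cV[C]_n) : C :=
  \sum_i (X i 0)%:C%C * y i 0.

Lemma xcoordZ n (X : 'cV[R]_n) (c : C) (y : 'cV[C]_n) :
  xcoord X (c *: y) = c * xcoord X y.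
Proof. by rewrite /xcoord mulr_sumr; apply: eq_bigr => i _; rewrite mxE mulrCA. Qed.

Lemma sqnorm_xcoord_split n (X : 'cV[R]_n) (y : 'cV[C]_n) :
  \sum_i X i 0 ^+ 2 = 1 ->
  sqnorm y = sqmod (xcoord X y) + sqnorm (y - xcoord X y *: cmx X).
Proof.
move=> X_unit; set c := xcoord X y.
have Rec : complex.Re c = \sum_i X i 0 * complex.Re (y i 0).
  by rewrite raddf_sum; apply: eq_bigr => i _ /=; rewrite ReMr.
have Imc : complex.Im c = \sum_i X i 0 * complex.Im (y i 0).
  by rewrite raddf_sum; apply: eq_bigr => i _ /=; rewrite ImMr.
have -> : sqnorm (y - c *: cmx X) = \sum_i (sqmod (y i 0)
    - 2 * complex.Re c * (X i 0 * complex.Re (y i 0))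
    - 2 * complex.Im c * (X i 0 * complex.Im (y i 0))
    + sqmod c * X i 0 ^+ 2).
  apply: eq_bigr => i _; rewrite !mxE /sqmod !raddfD !raddfN /= ReM ImM /=; ring.
rewrite /sqnorm /sqmod !big_split /= !sumrN -!mulr_sumr -Rec -Imc X_unit; ring.
Qed.

End Complexification.

Lemma trmx_adjmx (F : pzRingType) n (e : rel 'I_n) :
  symmetric e -> (adjmx F e)^T = adjmx F e.
Proof. by move=> e_sym; apply/matrixP => i j; rewrite !mxE e_sym. Qed.

Section RealSymmetric.
Variable R : rcfType.
Local Notation C := (R[i]).

Lemma real_symmetric_spectral n (G : 'M[R]_n) : G^T = G ->
  exists Q : 'M[C]_n, exists d : 'rV[R]_n,
    [/\ cadj Q *m Q = 1%:M, Q *m cadj Q = 1%:M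
      & Q *m cmx G = diag_mx (cmx d) *m Q].
Proof.
move=> GT; have G_herm := cmx_herm GT.
have /orthomx_spectralP G_spec := hermitian_normalmx G_herm.
set Q := spectralmx _ in G_spec; set D := spectral_diag _ in G_spec.
have QQ' : Q *m cadj Q = 1%:M.
  by have /unitarymxP := spectral_unitarymx (cmx G); rewrite trmxC_cadj.
exists Q, (map_mx (@complex.Re R) D); split=> //; first exact: mulmx1C.
have -> : cmx (map_mx (@complex.Re R) D) = D.
  apply/matrixP => i l; rewrite !mxE RRe_real //.
  by move/mxOverP: (hermitian_spectral_diag_real G_herm); apply.
by rewrite G_spec invmx_unitary ?spectral_unitarymx // trmxC_cadj !mulmxA QQ' mul1mx.
Qed.

Lemma row_unitary_neq0 n (Q : 'M[C]_n) l : Q *m cadj Q = 1%:M -> row l Q != 0.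
Proof.
move=> QQ'; apply/eqP => rowQ0; move: (congr1 (row l) QQ').
rewrite row_mul rowQ0 mul0mx row1 => /matrixP/(_ 0 l).
by rewrite !mxE !eqxx => /eqP; rewrite eq_sym oner_eq0.
Qed.

End RealSymmetric.

Section PerronVector.
Variables (R : rcfType) (n : nat) (e : rel 'I_n) (lam1 : R) (X : 'cV[R]_n).
Local Notation C := (R[i]).
Local Notation G := (adjmx R e).
Hypotheses (e_simple : simple_graph e) (e_connected : connected_graph e).
Hypotheses (X_eigen : G *m X = lam1 *: X) (X_pos : forall m, 0 < X m 0).

Lemma adjmx_eigen_orth_eq0 (Z : 'cV[R]_n) :
  G *m Z = lam1 *: Z -> \sum_i X i 0 * Z i 0 = 0 -> Z = 0.
Proof.
move=> Z_eigen XZ0; apply/matrixP => i j; rewrite ord1 [RHS]mxE.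
(* [W] is a nonnegative eigenvector vanishing at [i0], hence everywhere by
   connectivity. *)
have [i0 _ min_i0] := @arg_minP _ R _ i xpredT (fun j => Z j 0 / X j 0) isT.
set c := Z i0 0 / X i0 0 in min_i0; pose W := Z - c *: X.
have WE l : W l 0 = Z l 0 - c * X l 0 by rewrite !mxE.
have W_ge0 l : 0 <= W l 0 by rewrite WE subr_ge0 -ler_pdivlMr ?min_i0.
have W_eigen l : \sum_m (e l m)%:R * W m 0 = lam1 * W l 0.
  have : G *m W = lam1 *: W.
    by rewrite mulmxBr -scalemxAr X_eigen Z_eigen scalerBr !scalerA mulrC.
  by move/matrixP/(_ l 0); rewrite !mxE => <-; apply: eq_bigr => m _; rewrite ?mxE.
have W_nbr x y : e x y -> W x 0 = 0 -> W y 0 = 0.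
  move=> exy Wx; move: (W_eigen x); rewrite Wx mulr0 => /eqP.
  rewrite psumr_eq0 => [/allP/(_ y (mem_index_enum y))|m _]; last first.
    by rewrite mulr_ge0 ?ler0n.
  by rewrite exy mul1r => /eqP.
have W_closed : closed e [pred x | W x 0 == 0].
  move=> x y exy; rewrite !inE; apply/eqP/eqP; first exact: W_nbr.
  by apply: W_nbr; rewrite (proj1 e_simple).
have Z_c l : Z l 0 = c * X l 0.
  have := closed_connect W_closed (e_connected i0 l).
  rewrite !inE WE /c mulfVK ?lt0r_neq0 // subrr eqxx => /esym/eqP.
  by rewrite WE => /eqP; rewrite subr_eq0 => /eqP.
have sumX2_gt0 : 0 < \sum_l X l 0 ^+ 2.
  rewrite (bigD1 i) //= ltr_pwDl ?exprn_gt0 ?sumr_ge0 // => l _; exact: sqr_ge0.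
have c0 : c = 0.
  move: XZ0; under eq_bigr do rewrite Z_c mulrCA -expr2.
  by rewrite -mulr_sumr => /eqP; rewrite mulf_eq0 (gt_eqF sumX2_gt0) orbF => /eqP.
by rewrite Z_c c0 mul0r.
Qed.

Lemma adjmx_ceigen_orth_eq0 (Y : 'cV[C]_n) :
  cmx G *m Y = lam1%:C%C *: Y -> xcoord X Y = 0 -> Y = 0.
Proof.
move=> Y_eigen XY0.
have part_eq0 (f : {additive C -> R}) :
    (forall r z, f (r%:C%C * z) = r * f z) -> \col_j f (Y j 0) = 0.
  move=> fM; apply: adjmx_eigen_orth_eq0.
    apply/matrixP => l j; rewrite ord1 !mxE.
    move/matrixP/(_ l 0): Y_eigen; rewrite !mxE => /(congr1 f).
    rewrite fM raddf_sum => <-; apply: eq_bigr => m _ /=.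
    by rewrite !mxE fM.
  have := congr1 f XY0; rewrite /xcoord raddf_sum raddf0 => fXY0.
  by rewrite -[RHS]fXY0; apply: eq_bigr => m _ /=; rewrite mxE fM.
apply/matrixP => l j; rewrite ord1 mxE.
move/matrixP/(_ l 0): (part_eq0 _ (@ReMr R)).
move/matrixP/(_ l 0): (part_eq0 _ (@ImMr R)).
by rewrite !mxE; case: (Y l 0) => a b /= -> ->.
Qed.


Lemma xcoord_mx (y : 'cV[C]_n) : xcoord X y = ((cmx X)^T *m y) 0 0.
Proof. by rewrite mxE; apply: eq_bigr => i _; rewrite !mxE. Qed.

Lemma trmx_cmx_adjmx : (cmx G)^T = cmx G.
Proof. by rewrite /cmx map_trmx trmx_adjmx //; case: e_simple. Qed.

Lemma cmx_adjmx_perron : cmx G *m cmx X = lam1%:C%C *: cmx X.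
Proof. by rewrite /cmx -map_mxM X_eigen map_mxZ. Qed.

Lemma xcoord_adjmx (y : 'cV[C]_n) : xcoord X (cmx G *m y) = lam1%:C%C * xcoord X y.
Proof.
have XG : (cmx X)^T *m cmx G = lam1%:C%C *: (cmx X)^T.
  by rewrite -trmx_cmx_adjmx -trmx_mul cmx_adjmx_perron linearZ.
by rewrite !xcoord_mx mulmxA XG -scalemxAl mxE.
Qed.

Hypothesis X_unit : \sum_i X i 0 ^+ 2 = 1.

Lemma xcoord_orth_proj (y : 'cV[C]_n) : xcoord X (y - xcoord X y *: cmx X) = 0.
Proof.
have XX : (cmx X)^T *m cmx X = 1.
  apply/matrixP => a b; rewrite !ord1 !mxE eqxx /=.
  transitivity ((\sum_i X i 0 ^+ 2)%:C%C); last by rewrite X_unit.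
  by rewrite rmorph_sum; apply: eq_bigr => i _; rewrite !mxE -rmorphM expr2.
by rewrite [LHS]xcoord_mx mulmxBr -scalemxAr XX scalemx1 mxE -xcoord_mx !mxE eqxx subrr.
Qed.

Lemma adjmx_ceigen_collinear (Y : 'cV[C]_n) :
  cmx G *m Y = lam1%:C%C *: Y -> Y = xcoord X Y *: cmx X.
Proof.
move=> Y_eigen; apply/eqP; rewrite -subr_eq0; apply/eqP.
apply: adjmx_ceigen_orth_eq0 (xcoord_orth_proj Y).
by rewrite mulmxBr -scalemxAr cmx_adjmx_perron Y_eigen scalerBr !scalerA mulrC.
Qed.

Variable lam2 : R.
Hypothesis lam2_max : forall mu, eigenvalue G mu -> mu != lam1 -> `|mu| <= `|lam2|.

Lemma adjmx_orth_sqnorm_le (y : 'cV[C]_n) :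
  xcoord X y = 0 -> sqnorm (cmx G *m y) <= lam2 ^+ 2 * sqnorm y.
Proof.
move=> y_orth.
have [Q [d [Q'Q QQ' QG]]] := real_symmetric_spectral (trmx_adjmx R (proj1 e_simple)).
have rowQ_eigen l : row l Q *m cmx G = (d 0 l)%:C%C *: row l Q.
  by rewrite -row_mul QG row_mul row_diag_mx -scalemxAl -rowE mxE.
rewrite -(sqnorm_isometry y Q'Q) -(sqnorm_isometry _ Q'Q) mulmxA QG -mulmxA.
rewrite mulr_sumr; apply: ler_sum => l _.
rewrite mul_diag_mx mxE sqmodM [cmx _ _ _]mxE sqmodR.
have [dl_lam1|dl_neq] := eqVneq (d 0 l) lam1.
  (* the rows of [Q] for the eigenvalue [lam1] are collinear to [X^T] *)
  have : cmx G *m (row l Q)^T = lam1%:C%C *: (row l Q)^T.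
    by rewrite -trmx_cmx_adjmx -trmx_mul rowQ_eigen dl_lam1 linearZ.
  move/adjmx_ceigen_collinear => rowQ_X.
  suff -> : (Q *m y) l 0 = 0 by rewrite sqmodR expr0n !mulr0.
  transitivity ((row l Q *m y) 0 0); first by rewrite -row_mul !mxE.
  by rewrite -[row l Q]trmxK rowQ_X linearZ -scalemxAl mxE -xcoord_mx y_orth mulr0.
rewrite ler_wpM2r ?sqmod_ge0 //.
have dl_eigen : eigenvalue G (d 0 l).
  apply/eigenvalue_cmx/eigenvalueP; exists (row l Q); first exact: rowQ_eigen.
  exact: row_unitary_neq0.
rewrite -(real_normK (num_real (d 0 l))) -(real_normK (num_real lam2)).
by rewrite lerXn2r ?nnegrE ?normr_ge0 ?lam2_max.
Qed.

Lemma adjmx_sqnorm_le (y : 'cV[C]_n) :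
  sqnorm (cmx G *m y) <= lam1 ^+ 2 * sqmod (xcoord X y)
                         + lam2 ^+ 2 * (sqnorm y - sqmod (xcoord X y)).
Proof.
set c := xcoord X y; set y' := y - c *: cmx X.
have Gy : cmx G *m y = cmx G *m y' + (lam1%:C%C * c) *: cmx X.
  by rewrite mulmxBr -scalemxAr cmx_adjmx_perron scalerA mulrC subrK.
rewrite (sqnorm_xcoord_split _ X_unit) xcoord_adjmx -/c sqmodM sqmodR.
rewrite (sqnorm_xcoord_split y X_unit) -/c -/y' addrAC subrr add0r.
rewrite lerD2l Gy addrK; exact/adjmx_orth_sqnorm_le/xcoord_orth_proj.
Qed.

End PerronVector.

Lemma big_mxtens_index (V : nmodType) n k (F : 'I_(n * k) -> V) :
  \sum_p F p = \sum_i \sum_a F (mxtens_index (i, a)).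
Proof.
rewrite (reindex (@mxtens_index n k)) /=; last first.
  exists (@mxtens_unindex n k) => x _; first exact: mxtens_indexK.
  exact: mxtens_unindexK.
by rewrite pair_big /=; apply: eq_bigr => -[i a].
Qed.

Section TensorSlices.
Variables (R : rcfType) (n k : nat).
Local Notation C := (R[i]).
Local Notation idx i a := (@mxtens_index n k (i, a)).
Implicit Types (z w : 'cV[C]_(n * k)) (X : 'cV[R]_n).

Definition vslice z (a : 'I_k) : 'cV[C]_n := \col_i z (idx i a) 0.
Definition vblock z (i : 'I_n) : 'cV[C]_k := \col_a z (idx i a) 0.

(* The orthogonal projection onto X (x) C^k has coordinates [xcoords X z]. *)
Definition xcoords X z : 'cV[C]_k := \col_a xcoord X (vslice z a).
Definition xproj X z : 'cV[C]_(n * k) :=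
  \col_p ((X (mxtens_unindex p).1 0)%:C%C * xcoords X z (mxtens_unindex p).2 0).

Lemma sqnorm_vslices z : sqnorm z = \sum_a sqnorm (vslice z a).
Proof.
rewrite /sqnorm big_mxtens_index exchange_big /=.
by apply: eq_bigr => a _; apply: eq_bigr => i _; rewrite mxE.
Qed.

Lemma sqnorm_vblocks z : sqnorm z = \sum_i sqnorm (vblock z i).
Proof.
rewrite /sqnorm big_mxtens_index /=.
by apply: eq_bigr => i _; apply: eq_bigr => a _; rewrite mxE.
Qed.

Lemma xcoords_vblocks X z : xcoords X z = \sum_i (X i 0)%:C%C *: vblock z i.
Proof.
apply/matrixP => a j; rewrite ord1 mxE summxE; apply: eq_bigr => i _.
by rewrite !mxE.
Qed.

Lemma vblock_xproj X z i : vblock (xproj X z) i = (X i 0)%:C%C *: xcoords X z.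
Proof. by apply/matrixP => a j; rewrite ord1 !mxE mxtens_indexK. Qed.

Lemma xprojD X z w : xproj X (z + w) = xproj X z + xproj X w.
Proof.
apply/matrixP => p j; rewrite !mxE.
rewrite /xcoord -mulrDr -big_split; congr (_ * _); apply: eq_bigr => i _.
by rewrite !mxE mulrDr.
Qed.

Lemma sqnorm_xproj X z :
  \sum_i X i 0 ^+ 2 = 1 -> sqnorm (xproj X z) = sqnorm (xcoords X z).
Proof.
move=> X_unit; rewrite sqnorm_vblocks.
under eq_bigr do rewrite vblock_xproj sqnormZ sqmodR.
by rewrite -mulr_suml X_unit mul1r.
Qed.

Lemma sqnorm_xproj_split X z : \sum_i X i 0 ^+ 2 = 1 ->
  sqnorm z = sqnorm (xproj X z) + sqnorm (z - xproj X z).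
Proof.
move=> X_unit; rewrite sqnorm_xproj // !sqnorm_vslices -big_split /=.
apply: eq_bigr => a _; rewrite (sqnorm_xcoord_split _ X_unit) mxE.
congr (_ + sqnorm _); apply/matrixP => i j.
by rewrite ord1 !mxE mxtens_indexK /= mulrC.
Qed.

Lemma vslice_Ablock (e : rel 'I_n) (lam1 : R) z a :
  vslice (Ablock k e lam1 *m z) a = (lam1^-1)%:C%C *: (cmx (adjmx R e) *m vslice z a).
Proof.
apply/matrixP => i j; rewrite ord1 !mxE big_mxtens_index mulr_sumr.
apply: eq_bigr => l _; rewrite (bigD1 a) //= big1 ?addr0 => [|b b_neq_a].
  by rewrite tensmxE !mxE eqxx mulr1 mulrA.
by rewrite tensmxE !mxE eq_sym (negbTE b_neq_a) mulr0 mul0r.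
Qed.

Lemma vblock_Ublock (gT : groupType) (gamma : 'I_n -> gT) (rho : gT -> 'M[C]_k) z i :
  vblock (Ublock gamma rho *m z) i = rho (gamma i) *m vblock z i.
Proof.
apply/matrixP => a j; rewrite ord1 !mxE big_mxtens_index (bigD1 i) //=.
rewrite [X in _ + X]big1 ?addr0 => [|l l_neq_i].
  apply: eq_bigr => b _; rewrite summxE (bigD1 i) //= big1 ?addr0 => [|l l_neq_i].
    by rewrite tensmxE !mxE !eqxx mul1r.
  by rewrite tensmxE !mxE eq_sym (negbTE l_neq_i) mul0r.
apply: big1 => b _; rewrite summxE big1 ?mul0r // => l' _.
rewrite tensmxE !mxE.
by case: (eqVneq i l') => [<-|i_neq_l']; rewrite ?(negbTE l_neq_i) ?andbF ?andFb !mul0r.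
Qed.

End TensorSlices.

Definition shrink_factor (R : numFieldType) (lam d : R) : R :=
  1 - (1 - lam ^+ 2) * ((1 - d) / 2) ^+ 2 / 2.

Lemma shrink_factor_lt1 (R : realFieldType) (lam d : R) :
  0 <= lam < 1 -> 0 <= d < 1 -> shrink_factor lam d < 1.
Proof.
move=> /andP[lam0 lam1] /andP[d0 d1].
have : 0 < (1 - lam ^+ 2) * ((1 - d) / 2) ^+ 2 by rewrite mulr_gt0 ?exprn_gt0; nra.
rewrite /shrink_factor; lra.
Qed.

Lemma shrink_factor_ge0 (R : realFieldType) (lam d : R) :
  0 <= lam < 1 -> 0 <= d <= 1 -> 0 <= shrink_factor lam d.
Proof.
move=> /andP[lam_ge0 lam_lt1] /andP[d_ge0 d_le1].
rewrite /shrink_factor; set sg := (1 - d) / 2.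
have sg0 : 0 <= sg by rewrite /sg; lra.
have sg_le1 : sg ^+ 2 <= 1 by rewrite expr2 mulr_ile1 // /sg; lra.
have lam2_le1 : lam ^+ 2 <= 1 by rewrite expr2 mulr_ile1 // ltW.
have lam2_ge0 := sqr_ge0 lam.
have : (1 - lam ^+ 2) * sg ^+ 2 <= 1 by rewrite mulr_ile1 ?sqr_ge0 //; lra.
lra.
Qed.

(* The numbers are the norms of [P z] (c), of the component of [A z] orthogonal
   to the fixed space (b), of [P y] (gm) for [y = U A z], of [z] (s), and the
   squared norm of [U A y] (F). *)
Lemma shrink_factor_bound (R : realFieldType) (lam d c b gm s F : R) :
  0 <= lam < 1 -> 0 <= d <= 1 -> 0 <= c -> 0 <= b -> 0 <= gm -> 0 <= s ->
  c ^+ 2 <= s ^+ 2 -> gm <= d * c + b -> gm ^+ 2 <= c ^+ 2 + b ^+ 2 ->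
  b ^+ 2 <= lam ^+ 2 * (s ^+ 2 - c ^+ 2) ->
  F <= gm ^+ 2 + lam ^+ 2 * (c ^+ 2 + b ^+ 2 - gm ^+ 2) ->
  F <= (shrink_factor lam d * s) ^+ 2.
Proof.
move=> /andP[lam_ge0 lam_lt1] /andP[d_ge0 d_le1] c0 b0 gm0 s0 cs.
move=> gm_le gm2_le b2_le F_le.
set sg := (1 - d) / 2.
have sg0 : 0 <= sg by rewrite /sg; lra.
have sg_le : sg <= 1 / 2 by rewrite /sg; lra.
have lam2_le1 : lam ^+ 2 <= 1 by nra.
suff : F <= (1 - (1 - lam ^+ 2) * sg ^+ 2) * s ^+ 2.
  have := sqr_ge0 ((1 - lam ^+ 2) * sg ^+ 2 * s / 2); rewrite /shrink_factor -/sg; nra.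
have F_le' : F <= (1 - lam ^+ 2) * gm ^+ 2 + lam ^+ 2 * (c ^+ 2 + b ^+ 2) by lra.
have cb_le : c ^+ 2 + b ^+ 2 <= s ^+ 2 - (1 - lam ^+ 2) * (s ^+ 2 - c ^+ 2) by lra.
(* either [z] has a sizeable component off the fixed space, which [A]
   contracts, or [P z] carries most of the norm and [U] moves it *)
have [off_large|off_small] := lerP (sg ^+ 2 * s ^+ 2) (s ^+ 2 - c ^+ 2).
  have : (1 - lam ^+ 2) * gm ^+ 2 <= (1 - lam ^+ 2) * (c ^+ 2 + b ^+ 2).
    by rewrite ler_wpM2l // subr_ge0.
  have : (1 - lam ^+ 2) * (sg ^+ 2 * s ^+ 2) <= (1 - lam ^+ 2) * (s ^+ 2 - c ^+ 2).
    by rewrite ler_wpM2l // subr_ge0.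
  lra.
have b_le : b <= sg * s.
  have off_ge0 : 0 <= (1 - lam ^+ 2) * (s ^+ 2 - c ^+ 2).
    by rewrite mulr_ge0 // subr_ge0.
  have b2_le' : b ^+ 2 <= (sg * s) ^+ 2 by rewrite exprMn; lra.
  have sgs0 : 0 <= sg * s := mulr_ge0 sg0 s0.
  by rewrite -(@ler_pXn2r _ 2) ?nnegrE.
have c_le : c <= s by rewrite -(@ler_pXn2r _ 2) ?nnegrE.
have gm_le' : gm <= (1 - sg) * s.
  have dc_le : d * c <= d * s by rewrite ler_wpM2l.
  by move: b_le; rewrite /sg; lra.
have gm2_le' : gm ^+ 2 <= (1 - sg ^+ 2) * s ^+ 2.
  have one_sg0 : 0 <= 1 - sg by lra.
  apply: le_trans (_ : ((1 - sg) * s) ^+ 2 <= _).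
    by rewrite ler_pXn2r ?nnegrE ?mulr_ge0.
  by rewrite exprMn ler_wpM2r ?sqr_ge0 //; nra.
have : (1 - lam ^+ 2) * gm ^+ 2 <= (1 - lam ^+ 2) * ((1 - sg ^+ 2) * s ^+ 2).
  by rewrite ler_wpM2l // subr_ge0.
have : lam ^+ 2 * (c ^+ 2 + b ^+ 2) <= lam ^+ 2 * s ^+ 2.
  rewrite ler_wpM2l ?sqr_ge0 //; apply: le_trans cb_le _.
  by rewrite gerDl oppr_le0 mulr_ge0 // subr_ge0.
lra.
Qed.


Section Shrinkage.
Variables (R : rcfType) (N : nat) (A U : 'M[R[i]]_N).
Variables (P : 'cV[R[i]]_N -> 'cV[R[i]]_N) (lam d : R).
Hypotheses (lam_ge0 : 0 <= lam) (lam_lt1 : lam < 1) (d_ge0 : 0 <= d) (d_le1 : d <= 1).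
Hypothesis PD : forall z w, P (z + w) = P z + P w.
Hypothesis sqnorm_P_split : forall z, sqnorm z = sqnorm (P z) + sqnorm (z - P z).
Hypothesis P_A : forall z, P (A *m z) = P z.
Hypothesis sqnorm_A_le :
  forall z, sqnorm (A *m z) <= sqnorm (P z) + lam ^+ 2 * (sqnorm z - sqnorm (P z)).
Hypothesis sqnorm_U : forall z, sqnorm (U *m z) = sqnorm z.
Hypothesis P_U_P : forall z, cvnorm (P (U *m P z)) <= d * cvnorm (P z).

Lemma sqnorm_P_le z : sqnorm (P z) <= sqnorm z.
Proof. by rewrite [leRHS]sqnorm_P_split lerDl sqnorm_ge0. Qed.

Lemma UA_contraction z : cvnorm (U *m (A *m z)) <= cvnorm z.
Proof.
apply: cvnorm_le_sqnorm; rewrite sqnorm_U; apply: le_trans (sqnorm_A_le z) _.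
have lam2_le1 : lam ^+ 2 <= 1 by rewrite expr2 mulr_ile1 // ltW.
have : 0 <= (1 - lam ^+ 2) * (sqnorm z - sqnorm (P z)).
  by rewrite mulr_ge0 // subr_ge0 // sqnorm_P_le.
lra.
Qed.

Lemma UA_twice_shrink z :
  cvnorm (U *m (A *m (U *m (A *m z)))) <= shrink_factor lam d * cvnorm z.
Proof.
set b := A *m z - P z; set y := U *m (A *m z).
have sqnorm_b : sqnorm b = sqnorm (A *m z) - sqnorm (P z).
  by rewrite [sqnorm (A *m z)]sqnorm_P_split P_A addrC addKr.
have sqnorm_y : sqnorm y = sqnorm (P z) + sqnorm b.
  by rewrite /y sqnorm_U sqnorm_b addrC subrK.
have Py : P y = P (U *m P z) + P (U *m b) by rewrite -PD -mulmxDr /b addrC subrK.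
have Py_le : cvnorm (P y) <= d * cvnorm (P z) + cvnorm b.
  rewrite Py; apply: le_trans (cvnormD _ _) (lerD (P_U_P z) _).
  by apply: cvnorm_le_sqnorm; rewrite -(sqnorm_U b) sqnorm_P_le.
have lam01 : 0 <= lam < 1 by rewrite lam_ge0 lam_lt1.
have d01 : 0 <= d <= 1 by rewrite d_ge0 d_le1.
apply: cvnorm_le_sqr; first by rewrite mulr_ge0 ?cvnorm_ge0 ?shrink_factor_ge0.
apply: (shrink_factor_bound lam01 d01 (cvnorm_ge0 (P z)) (cvnorm_ge0 b)
          (cvnorm_ge0 (P y)) (cvnorm_ge0 z) _ Py_le); rewrite !sqr_cvnorm.
- exact: sqnorm_P_le.
- by rewrite -sqnorm_y sqnorm_P_le.
- by rewrite sqnorm_b; have := sqnorm_A_le z; lra.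
- by rewrite sqnorm_U -sqnorm_y; apply: sqnorm_A_le.
Qed.
End Shrinkage.

Lemma cvnorm_expmx_le (R : rcfType) N (M : 'M[R[i]]_N) (g : R) : 0 <= g ->
  (forall z, cvnorm (M *m z) <= cvnorm z) ->
  (forall z, cvnorm (M *m (M *m z)) <= g * cvnorm z) ->
  forall j z, cvnorm (M ^+ j *m z) <= g ^+ j./2 * cvnorm z.
Proof.
move=> g0 M_le1 M2_le; elim/ltn_ind => j IH z.
case: j IH => [|[|j]] IH.
- by rewrite expr0 mul1mx expr0 mul1r.
- by rewrite expr1 /= expr0 mul1r.
rewrite !exprSr -!mulmxE -!mulmxA.
apply: le_trans (IH j (leqnSn _) _) _.
by rewrite -mulrA ler_wpM2l ?exprn_ge0.
Qed.

Lemma sqnorm_convex_comb (R : rcfType) k n (w : 'I_n -> 'cV[R[i]]_k)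
    (p : 'I_n -> R) (N : R) :
  (forall i, sqnorm (w i) = N) -> \sum_i p i = 1 ->
  sqnorm (\sum_i (p i)%:C%C *: w i)
    = N - (\sum_i \sum_j p i * p j * sqnorm (w i - w j)) / 2.
Proof.
move=> w_norm p_sum1; rewrite -redotvv redot_suml.
transitivity (\sum_i \sum_j (p i * p j * N - p i * p j * sqnorm (w i - w j) / 2)).
  apply: eq_bigr => i _; rewrite redot_sumr; apply: eq_bigr => j _.
  by rewrite redotZl redotZr redot_polar !w_norm; field.
under eq_bigr do rewrite sumrB -!mulr_suml -mulr_sumr p_sum1 mulr1.
by rewrite sumrB -!mulr_suml p_sum1 mul1r.
Qed.

Lemma sqnorm_convex_comb_le (R : rcfType) k n (w : 'I_n -> 'cV[R[i]]_k)
    (p : 'I_n -> R) (N pmin K : R) a b :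
  (forall i, sqnorm (w i) = N) -> \sum_i p i = 1 ->
  0 <= pmin -> (forall i, pmin <= p i) -> a != b -> K <= sqnorm (w a - w b) ->
  sqnorm (\sum_i (p i)%:C%C *: w i) <= N - pmin * K / 4.
Proof.
move=> w_norm p_sum1 pmin0 p_ge ab K_le; rewrite (sqnorm_convex_comb w_norm p_sum1).
set D := fun i j => sqnorm (w i - w j).
suff : pmin * K / 2 <= \sum_i \sum_j p i * p j * D i j by lra.
have p_ge0 i : 0 <= p i := le_trans pmin0 (p_ge i).
have rows_ab : \sum_j (p a * p j * D a j + p b * p j * D b j)
               <= \sum_i \sum_j p i * p j * D i j.
  rewrite big_split /= [leRHS](bigD1 a) //= lerD2l [leRHS](bigD1 b) 1?eq_sym //=.
  rewrite lerDl sumr_ge0 // => i _; apply: sumr_ge0 => j _.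
  by rewrite !mulr_ge0 ?sqnorm_ge0.
apply: le_trans rows_ab.
rewrite -[pmin * K / 2]mul1r -{1}p_sum1 mulr_suml; apply: ler_sum => j _.
(* by the triangle inequality, [w j] is far from [w a] or from [w b] *)
have K_le' : K <= 2 * D a j + 2 * D b j.
  apply: le_trans K_le _; rewrite /D.
  have -> : w a - w b = (w a - w j) - (w b - w j) by rewrite opprB addrA subrK.
  exact: sqnormB_le.
have Da0 : 0 <= D a j := sqnorm_ge0 _.
have Db0 : 0 <= D b j := sqnorm_ge0 _.
have pa_le : pmin * p j * D a j <= p a * p j * D a j by rewrite !ler_wpM2r.
have pb_le : pmin * p j * D b j <= p b * p j * D b j by rewrite !ler_wpM2r.
have : pmin * p j * K <= pmin * p j * (2 * D a j + 2 * D b j).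
  by rewrite ler_wpM2l // mulr_ge0.
lra.
Qed.

Section UnitaryRep.
Variables (R : rcfType) (gT : groupType) (k : nat) (rho : gT -> 'M[R[i]]_k).
Hypothesis rho_unitary : unitary_rep rho.

Lemma unitary_rep_cadj x : cadj (rho x) *m rho x = 1%:M.
Proof. by case: rho_unitary => _ _ /(_ x)/unitary_mx_cadj. Qed.

Lemma sqnorm_unitary_rep x u : sqnorm (rho x *m u) = sqnorm u.
Proof. exact/sqnorm_isometry/unitary_rep_cadj. Qed.

Lemma unitary_repV x : rho x^-1 = cadj (rho x).
Proof.
case: rho_unitary => rho1 rhoM rhoU.
have rhoVx : rho x^-1 *m rho x = 1%:M by rewrite -rhoM mulVg rho1.
by rewrite -[rho _]mulmx1 -(rhoU x) mulmxA rhoVx mul1mx.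
Qed.

Variables (n : nat) (gamma : 'I_n -> gT) (kappa : R).
Hypotheses (rho_fin : finite_image rho) (rho_irr : irreducible_rep rho).
Hypotheses (rho_nontriv : nontrivial_rep rho) (kappa_prop : kappa_property gamma kappa).
Hypothesis kappa_gt0 : 0 < kappa.

Lemma kappa_property_sqnorm u : 0 < sqnorm u ->
  exists a b, kappa ^+ 2 * sqnorm u < sqnorm (rho (gamma a) *m u - rho (gamma b) *m u).
Proof.
move=> u_gt0; set r := cvnorm u.
have r_gt0 : 0 < r by rewrite sqrtr_gt0.
have r_unit : cvnorm ((r^-1)%:C%C *: u) = 1.
  by rewrite cvnormZ sqmodR sqrtr_sqr ger0_norm ?invr_ge0 ?ltW // mulVf ?gt_eqF.
have [a [b]] := kappa_prop rho_unitary rho_fin rho_irr rho_nontriv r_unit.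
have [_ rhoM _] := rho_unitary; rewrite rhoM unitary_repV -mulmxA.
set u' := _ *: u.
(* [rho (t_a^-1 t_b) u' - u'] is [rho t_b u' - rho t_a u'] moved by a unitary *)
have -> : cadj (rho (gamma a)) *m (rho (gamma b) *m u') - u'
          = cadj (rho (gamma a)) *m (rho (gamma b) *m u' - rho (gamma a) *m u').
  by rewrite mulmxBr (mulmxA _ (rho (gamma a))) unitary_rep_cadj mul1mx.
rewrite cvnorm_isometry; last by rewrite cadjK; case: rho_unitary => _ _; apply.
rewrite /u' -!scalemxAr -scalerBr cvnormZ sqmodR sqrtr_sqr ger0_norm ?invr_ge0 ?ltW //.
rewrite -(ltr_pM2l r_gt0) mulrA mulfV ?gt_eqF // mul1r => kappa_lt.
exists b, a; rewrite -!sqr_cvnorm -/r -exprMn mulrC.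
by rewrite ltrXn2r ?nnegrE ?mulr_ge0 ?cvnorm_ge0 ?ltW.
Qed.

Lemma sqnorm_rep_average_le (X : 'cV[R]_n) (xmin : R) :
  0 <= xmin -> (forall m, xmin <= X m 0) -> \sum_m X m 0 ^+ 2 = 1 ->
  forall u, sqnorm (\sum_i (X i 0 ^+ 2)%:C%C *: (rho (gamma i) *m u))
              <= (1 - xmin ^+ 2 * kappa ^+ 2 / 4) * sqnorm u.
Proof.
move=> xmin0 xmin_le X_unit u.
have [u0|u_neq0] := eqVneq (sqnorm u) 0.
  rewrite (sqnorm_eq0 u0) big1 ?sqnorm0 ?mulr0 // => i _.
  by rewrite mulmx0 scaler0.
have u_gt0 : 0 < sqnorm u by rewrite lt_def u_neq0 sqnorm_ge0.
have [a [b ab_far]] := kappa_property_sqnorm u_gt0.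
have ab : a != b.
  apply: contraTneq ab_far => ->.
  by rewrite subrr sqnorm0 -leNgt mulr_ge0 ?sqr_ge0 ?sqnorm_ge0.
have xmin2_le i : xmin ^+ 2 <= X i 0 ^+ 2.
  by rewrite lerXn2r ?nnegrE // (le_trans xmin0).
apply: le_trans (sqnorm_convex_comb_le (w := fun i => rho (gamma i) *m u)
  (fun i => sqnorm_unitary_rep (gamma i) u) X_unit (sqr_ge0 xmin) xmin2_le ab
  (ltW ab_far)) _.
by rewrite le_eqVlt; apply/orP; left; apply/eqP; ring.
Qed.

End UnitaryRep.

Section TwistedWalk.
Variables (R : realType) (n : nat) (e : rel 'I_n) (lam1 lam2 : R) (X : 'cV[R]_n).
Local Notation C := (R[i]).
Hypotheses (e_simple : simple_graph e) (e_connected : connected_graph e).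
Hypotheses (lam1_gt0 : 0 < lam1) (X_eigen : adjmx R e *m X = lam1 *: X).
Hypotheses (X_pos : forall m, 0 < X m 0) (X_unit : \sum_m X m 0 ^+ 2 = 1).
Hypothesis lam2_max :
  forall mu, eigenvalue (adjmx R e) mu -> mu != lam1 -> `|mu| <= `|lam2|.
Hypothesis lam_lt1 : `|lam2| / lam1 < 1.
Variables (gT : groupType) (gamma : 'I_n -> gT) (kappa xmin : R).
Variables (k : nat) (rho : gT -> 'M[C]_k).
Hypotheses (rho_unitary : unitary_rep rho) (rho_fin : finite_image rho).
Hypotheses (rho_irr : irreducible_rep rho) (rho_nontriv : nontrivial_rep rho).
Hypotheses (kappa_gt0 : 0 < kappa) (kappa_prop : kappa_property gamma kappa).
Hypotheses (xmin_ge0 : 0 <= xmin) (xmin_le : forall m, xmin <= X m 0).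

Local Notation A := (Ablock k e lam1).
Local Notation U := (Ublock gamma rho).
Local Notation P := (@xproj R n k X).
Local Notation lam := (`|lam2| / lam1).
Local Notation d := (1 - xmin ^+ 2 * kappa ^+ 2 / 8).

Lemma xproj_Ablock z : P (A *m z) = P z.
Proof.
suff xcoordsA : xcoords X (A *m z) = xcoords X z by rewrite /xproj xcoordsA.
apply/matrixP => a j.
rewrite ord1 !mxE vslice_Ablock xcoordZ (xcoord_adjmx e_simple X_eigen).
by rewrite mulrA -rmorphM mulVf ?gt_eqF // mul1r.
Qed.

Lemma Ablock_sqnorm_le z :
  sqnorm (A *m z) <= sqnorm (P z) + lam ^+ 2 * (sqnorm z - sqnorm (P z)).
Proof.
rewrite sqnorm_xproj // !sqnorm_vslices -sumrB mulr_sumr -big_split /=.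
apply: ler_sum => a _; rewrite vslice_Ablock sqnormZ sqmodR mxE.
set c := sqmod (xcoord X (vslice z a)); set s := sqnorm (vslice z a).
have -> : c + lam ^+ 2 * (s - c)
          = lam1^-1 ^+ 2 * (lam1 ^+ 2 * c + lam2 ^+ 2 * (s - c)).
  by rewrite expr_div_n real_normK ?num_real //; field; rewrite gt_eqF.
by rewrite ler_wpM2l ?sqr_ge0 // adjmx_sqnorm_le.
Qed.

Lemma sqnorm_Ublock z : sqnorm (U *m z) = sqnorm z.
Proof.
rewrite !sqnorm_vblocks; apply: eq_bigr => i _.
by rewrite vblock_Ublock sqnorm_unitary_rep.
Qed.

Lemma sqnorm_xproj_Ublock_xproj z :
  sqnorm (P (U *m P z)) <= (1 - xmin ^+ 2 * kappa ^+ 2 / 4) * sqnorm (P z).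
Proof.
rewrite !sqnorm_xproj //.
have -> : xcoords X (U *m P z)
          = \sum_i (X i 0 ^+ 2)%:C%C *: (rho (gamma i) *m xcoords X z).
  rewrite xcoords_vblocks; apply: eq_bigr => i _.
  by rewrite vblock_Ublock vblock_xproj -scalemxAr scalerA -rmorphM expr2.
exact: (sqnorm_rep_average_le rho_unitary rho_fin rho_irr rho_nontriv kappa_prop
  kappa_gt0).
Qed.

Lemma xmin_kappa_le : xmin ^+ 2 * kappa ^+ 2 / 4 <= 1.
Proof.
have [k_gt0 _] := rho_irr; pose u : 'cV[C]_k := delta_mx (Ordinal k_gt0) 0.
have u_unit : sqnorm u = 1.
  rewrite /sqnorm (bigD1 (Ordinal k_gt0)) //= big1 ?addr0 => [|l l_neq].
    by rewrite mxE !eqxx /sqmod /= expr0n /= addr0 expr1n.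
  by rewrite mxE (negbTE l_neq) /sqmod /= expr0n /= addr0.
have := le_trans (sqnorm_ge0 _) (sqnorm_rep_average_le rho_unitary rho_fin rho_irr
          rho_nontriv kappa_prop kappa_gt0 xmin_ge0 xmin_le X_unit u).
by rewrite u_unit mulr1 subr_ge0.
Qed.

Lemma cvnorm_xproj_Ublock_xproj z : cvnorm (P (U *m P z)) <= d * cvnorm (P z).
Proof.
have t_le1 := xmin_kappa_le.
apply: cvnorm_le_sqr; first by rewrite mulr_ge0 ?cvnorm_ge0 //; lra.
apply: le_trans (sqnorm_xproj_Ublock_xproj z) _.
rewrite exprMn sqr_cvnorm ler_wpM2r ?sqnorm_ge0 //.
by have := sqr_ge0 (xmin ^+ 2 * kappa ^+ 2 / 8); lra.
Qed.

Lemma twisted_walk_pow_le j v :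
  cvnorm ((U *m A) ^+ j *m v) <= shrink_factor lam d ^+ j./2 * cvnorm v.
Proof.
have lam_ge0 : 0 <= lam by rewrite divr_ge0 ?normr_ge0 ?ltW.
have t_le1 := xmin_kappa_le.
have t_ge0 : 0 <= xmin ^+ 2 * kappa ^+ 2 by rewrite mulr_ge0 ?sqr_ge0.
have d_ge0 : 0 <= d by lra.
have d_le1 : d <= 1 by lra.
have P_split (z : 'cV[C]_(n * k)) := sqnorm_xproj_split z X_unit.
apply: cvnorm_expmx_le => [|z|z].
- by apply: shrink_factor_ge0; apply/andP.
- rewrite -mulmxA.
  exact: UA_contraction lam_ge0 lam_lt1 P_split Ablock_sqnorm_le sqnorm_Ublock z.
- rewrite -!mulmxA.
  exact: UA_twice_shrink lam_ge0 lam_lt1 d_ge0 d_le1 (@xprojD _ _ _ X) P_split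
    xproj_Ablock Ablock_sqnorm_le sqnorm_Ublock cvnorm_xproj_Ublock_xproj z.
Qed.

End TwistedWalk.

Theorem mainTheorem11 (R : realType) :
  exists g : R -> R -> R,
    (forall l d : R, 0 <= l < 1 -> 0 <= d < 1 -> g l d < 1) /\
    forall (n : nat) (e : rel 'I_n),
      simple_graph e -> connected_graph e ->
    forall (lam1 : R) (X : 'cV[R]_n),
      0 < lam1 ->
      eigenvalue (adjmx R e) lam1 ->
      (forall mu, eigenvalue (adjmx R e) mu -> `|mu| <= lam1) ->
      adjmx R e *m X = lam1 *: X ->
      (forall m, 0 < X m 0) ->
      \sum_m (X m 0) ^+ 2 = 1 ->
    forall lam2 : R,
      eigenvalue (adjmx R e) lam2 -> lam2 != lam1 ->
      (forall mu, eigenvalue (adjmx R e) mu -> mu != lam1 -> `|mu| <= `|lam2|) ->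
      `|lam2| / lam1 < 1 ->
    forall (gT : groupType) (gamma : 'I_n -> gT),
      generates_diffs gamma ->
    forall kappa : R, 0 < kappa -> kappa_property gamma kappa ->
    forall xmin : R,
      (exists m, xmin = X m 0) -> (forall m, xmin <= X m 0) ->
    forall (k : nat) (rho : gT -> 'M[R[i]]_k),
      unitary_rep rho -> finite_image rho -> irreducible_rep rho ->
      nontrivial_rep rho ->
    forall (j : nat) (v : 'cV[R[i]]_(n * k)),
      cvnorm (((Ublock gamma rho *m Ablock k e lam1) ^+ j) *m v)
        <= g (`|lam2| / lam1) (1 - xmin ^+ 2 * kappa ^+ 2 / 8) ^+ (j./2)
           * cvnorm v.
Proof.
exists (@shrink_factor R); split => [l d|]; first exact: shrink_factor_lt1.
move=> n e e_simple e_connected lam1 X lam1_gt0 _ _ X_eigen X_pos X_unit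
  lam2 _ _ lam2_max lam_lt1 gT gamma _ kappa kappa_gt0 kappa_prop
  xmin [m0 xmin_def] xmin_le k rho rho_unitary rho_fin rho_irr rho_nontriv.
have xmin_ge0 : 0 <= xmin by rewrite xmin_def ltW.
exact: (twisted_walk_pow_le e_simple e_connected lam1_gt0 X_eigen X_pos X_unit
  lam2_max lam_lt1 rho_unitary rho_fin rho_irr rho_nontriv kappa_gt0 kappa_prop
  xmin_ge0 xmin_le).
Qed.
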